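(* Let $\varphi$ be an increasing submodular setfunction on a sigma-algebra $(J,\mathcal{B})$, continuous from above, with $\varphi(\emptyset)=0$. Let $\mathcal{A}\subseteq\mathcal{B}$ be a set-algebra generating $\mathcal{B}$ (as a sigma-algebra). Then for every $X\in\mathcal{B}$ and every $\varepsilon>0$ there exists $Y\in\mathcal{A}$ such that $\varphi(X\triangle Y)<\varepsilon$.
   Context: $\varphi$ is increasing if $X\subseteq Y$ implies $\varphi(X)\le\varphi(Y)$, submodular if $\varphi(X)+\varphi(Y)\ge\varphi(X\cap Y)+\varphi(X\cup Y)$ for all $X,Y\in\mathcal{B}$, and continuous from above if for every decreasing sequence $X_1\supseteq X_2\supseteq\dots$ in $\mathcal{B}$ we have $\varphi(\bigcap_nX_n)=\lim_n\varphi(X_n)$. $X\triangle Y$ is the symmetric difference. *)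

From HB Require Import structures.
From mathcomp Require Import all_boot all_order all_algebra.
From mathcomp Require Import all_classical all_reals all_analysis.
Set Implicit Arguments. Unset Strict Implicit. Unset Printing Implicit Defensive.
Import Order.TTheory GRing.Theory Num.Theory numFieldNormedType.Exports.

Local Open Scope classical_set_scope.
Local Open Scope ring_scope.

Definition set_algebra (J : Type) (A : set (set J)) : Prop :=
  setring A /\ A setT.

Definition increasing_on (J : Type) (R : realType) (B : set (set J))
  (phi : set J -> R) : Prop :=
  forall X Y, B X -> B Y -> X `<=` Y -> phi X <= phi Y.

Definition submodular_on (J : Type) (R : realType) (B : set (set J))
  (phi : set J -> R) : Prop :=
  forall X Y, B X -> B Y -> phi (X `&` Y) + phi (X `|` Y) <= phi X + phi Y.

Definition continuous_from_above_on (J : Type) (R : realType)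
  (B : set (set J)) (phi : set J -> R) : Prop :=
  forall F : (set J)^nat, (forall n, B (F n)) -> nonincreasing_seq F ->
    (fun n => phi (F n)) @ \oo --> (phi (\bigcap_n F n) : R).

(* Call X approximable when X is in B and phi(X + Y) can be made arbitrarily
   small with Y in A.  Every set of A is approximable, and the approximable
   sets form a sigma-algebra, hence contain the sigma-algebra B generated by A.
   Closure under intersection and difference follows from
   (X1 op X2) + (Y1 op Y2) <= (X1 + Y1) | (X2 + Y2) for op = `&`, `\`, and
   from the subadditivity of phi, which is where submodularity enters.  For an increasing union X of
   approximable sets X_n, continuity from above gives phi(X \ X_n) --> 0, and
   X + Y <= (X \ X_n) | (X_n + Y). *)
From HB Require Import structures.
From mathcomp Require Import all_boot all_order all_algebra.
From mathcomp Require Import all_classical all_reals all_analysis.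
Set Implicit Arguments. Unset Strict Implicit. Unset Printing Implicit Defensive.
Import Order.TTheory GRing.Theory Num.Theory numFieldNormedType.Exports.
Local Open Scope classical_set_scope.
Local Open Scope ring_scope.

Lemma setIY_subU (T : Type) (X1 X2 Y1 Y2 : set T) :
  (X1 `&` X2) `+` (Y1 `&` Y2) `<=` (X1 `+` Y1) `|` (X2 `+` Y2).
Proof.
move=> x; rewrite /setY /setD /setI /setU /setC /=.
by case: (pselect (X1 x)); case: (pselect (X2 x));
   case: (pselect (Y1 x)); case: (pselect (Y2 x)); tauto.
Qed.

Lemma setDY_subU (T : Type) (X1 X2 Y1 Y2 : set T) :
  (X1 `\` X2) `+` (Y1 `\` Y2) `<=` (X1 `+` Y1) `|` (X2 `+` Y2).
Proof.
move=> x; rewrite /setY /setD /setU /setC /=.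
by case: (pselect (X1 x)); case: (pselect (X2 x));
   case: (pselect (Y1 x)); case: (pselect (Y2 x)); tauto.
Qed.

Lemma setY_subDU (T : Type) (X P Y : set T) :
  P `<=` X -> X `+` Y `<=` (X `\` P) `|` (P `+` Y).
Proof.
move=> PX x; have := PX x; rewrite /setY /setD /setU /setC /=.
by case: (pselect (X x)); case: (pselect (P x)); case: (pselect (Y x)); tauto.
Qed.

Lemma setring_setI_closed (T : Type) (G : set (set T)) :
  setring G -> setI_closed G.
Proof. by move=> [_ _ GD] X Y GX GY; rewrite -setDD; apply: (GD) => //; apply: GD. Qed.

Lemma setring_setY_closed (T : Type) (G : set (set T)) :
  setring G -> setY_closed G.
Proof. by move=> [_ GU GD] X Y GX GY; rewrite setY_def; apply: GU; apply: (GD). Qed.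

Lemma sigma_algebra_setring (T : Type) (G : set (set T)) :
  sigma_algebra setT G -> setring G.
Proof.
move=> sG; have [_ _ _ GI] := (sigma_algebraP (fun X _ => @subsetT _ X)).1 sG.
have [G0 GC GU] := sG.
split=> // [X Y GX GY|X Y GX GY].
  by rewrite -bigcup2E; apply: GU => -[|[]].
by rewrite setDE; apply: GI => //; rewrite -setTD; apply: GC.
Qed.

Section approximation.
Variables (R : realType) (J : Type) (B A : set (set J)) (phi : set J -> R).
Hypotheses (sigmaB : sigma_algebra setT B) (phi_incr : increasing_on B phi).
Hypotheses (phi_submod : submodular_on B phi) (phi_set0 : phi set0 = 0).

Let ringB : setring B := sigma_algebra_setring sigmaB.

Lemma phi_ge0 X : B X -> 0 <= phi X.
Proof. by move=> BX; rewrite -phi_set0; apply: phi_incr => //; case: ringB. Qed.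

Lemma phi_subadditive X Y : B X -> B Y -> phi (X `|` Y) <= phi X + phi Y.
Proof.
move=> BX BY; apply: le_trans (phi_submod BX BY).
by rewrite lerDr phi_ge0 //; apply: setring_setI_closed.
Qed.

Lemma phi_le_setU X Y Z : B X -> B Y -> B Z -> Z `<=` X `|` Y ->
  phi Z <= phi X + phi Y.
Proof.
move=> BX BY BZ ZXY; apply: le_trans (phi_subadditive BX BY).
by apply: phi_incr => //; case: ringB => _ BU _; apply: BU.
Qed.

Definition approximable X :=
  B X /\ forall e : R, 0 < e -> exists2 Y, A Y & phi (X `+` Y) < e.

Hypotheses (ringA : setring A) (sub_AB : A `<=` B).

Lemma sub_approximable : A `<=` approximable.
Proof.
by move=> X AX; split=> [|e e0]; [apply: sub_AB | exists X; rewrite ?setYK ?phi_set0].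
Qed.

Lemma approximable_op (op : set J -> set J -> set J) :
  (forall X1 X2 Y1 Y2, op X1 X2 `+` op Y1 Y2 `<=` (X1 `+` Y1) `|` (X2 `+` Y2)) ->
  (forall X1 X2, B X1 -> B X2 -> B (op X1 X2)) ->
  (forall Y1 Y2, A Y1 -> A Y2 -> A (op Y1 Y2)) ->
  forall X1 X2, approximable X1 -> approximable X2 -> approximable (op X1 X2).
Proof.
move=> opY Bop Aop X1 X2 [BX1 appX1] [BX2 appX2]; split=> [|e e0]; first exact: Bop.
have e2 : 0 < e / 2 by rewrite divr_gt0.
have [Y1 AY1 lt1] := appX1 _ e2; have [Y2 AY2 lt2] := appX2 _ e2.
have [BY1 BY2] := (sub_AB AY1, sub_AB AY2).
have BY := setring_setY_closed ringB.
exists (op Y1 Y2); first exact: Aop.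
apply: le_lt_trans (phi_le_setU (BY _ _ BX1 BY1) (BY _ _ BX2 BY2) _ (opY _ _ _ _)) _.
  by apply: BY; apply: Bop.
by rewrite [e](splitr e) ltrD.
Qed.

Hypothesis phi_cont : continuous_from_above_on B phi.

Lemma phi_bigcupD_cvg0 (F : (set J)^nat) : nondecreasing_seq F ->
  (forall n, B (F n)) -> (fun n => phi (\bigcup_k F k `\` F n)) @ \oo --> 0.
Proof.
move=> ndF BF; have [_ _ BU] := sigmaB; case: ringB => _ _ BD.
have lim0 : \bigcap_n (\bigcup_k F k `\` F n) = set0.
  apply/seteqP; split=> // x Dx; have [[k _ Fkx] _] := Dx 0%N I.
  by have [_] := Dx k I.
rewrite -phi_set0 -lim0; apply: phi_cont => [n|m n mn].
  by apply: BD => //; apply: BU.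
by apply/subsetPset; apply: setDS; apply/subsetPset/ndF.
Qed.

Lemma approximable_ndseq_closed : ndseq_closed approximable.
Proof.
move=> F ndF appF; have BF n : B (F n) by case: (appF n).
have BUF : B (\bigcup_k F k) by case: sigmaB => _ _; apply.
split=> // e e0; have e2 : 0 < e / 2 by rewrite divr_gt0.
have [N _ /(_ N (leqnn N)) ltN] := cvgr_lt _ (phi_bigcupD_cvg0 ndF BF) _ e2.
have [Y AY ltY] := (appF N).2 _ e2; exists Y => //.
have FN : F N `<=` \bigcup_k F k by exact: bigcup_sup.
have [_ _ BD] := ringB; have BY := setring_setY_closed ringB.
have [BFY BY'] := (BY _ _ (BF N) (sub_AB AY), BY _ _ BUF (sub_AB AY)).
apply: le_lt_trans (phi_le_setU (BD _ _ BUF (BF N)) BFY BY' (setY_subDU FN)) _.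
by rewrite [e](splitr e) ltrD.
Qed.

Lemma approximable_sigma_algebra : A setT -> sigma_algebra setT approximable.
Proof.
move=> AT; have [_ _ BD] := ringB; have [_ _ AD] := ringA.
apply/(sigma_algebraP (fun X _ => @subsetT _ X)); split.
- exact: sub_approximable.
- by move=> X1 X2 _; apply: approximable_op; [exact: setDY_subU | exact: BD | exact: AD].
- exact: approximable_ndseq_closed.
- apply: approximable_op; [exact: setIY_subU | exact: setring_setI_closed |].
  exact: setring_setI_closed.
Qed.

End approximation.

Theorem lemma4p2 (R : realType) (J : Type) (B A : set (set J))
  (phi : set J -> R) :
  sigma_algebra setT B ->
  increasing_on B phi -> submodular_on B phi ->
  continuous_from_above_on B phi -> phi set0 = 0 ->
  set_algebra A -> A `<=` B -> <<s A >> = B ->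
  forall X, B X -> forall eps : R, 0 < eps ->
    exists2 Y, A Y & phi (X `+` Y) < eps.
Proof.
move=> sigmaB incr submod cont phi0 [ringA AT] AB genB X BX e e0.
have appX : approximable B A phi X.
  rewrite -genB in BX; apply: smallest_sub BX; last exact: sub_approximable.
  exact: approximable_sigma_algebra.
by case: appX => _; apply.
Qed.
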